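(* Let $k, l \geq 1$ be integers. Suppose that some set $E_0$ of edges of the Cartesian product $C_{2k+1} \square C_{2l+1}$ is precolored using colors from a set of at most $5$ colors, such that the distance between any two edges of $E_0$ is at least three. Then this precoloring is extendable, i.e. there is a proper edge coloring of $C_{2k+1} \square C_{2l+1}$ with $\chi'(C_{2k+1} \square C_{2l+1})$ colors in which every edge of $E_0$ receives its prescribed color.
   Context: $C_n$ is the cycle on $n$ vertices. The Cartesian product $G \square H$ has vertex set $V(G)\times V(H)$, with $(u_1,u_2)$ adjacent to $(v_1,v_2)$ iff either $u_1=v_1$ and $u_2v_2 \in E(H)$, or $u_2=v_2$ and $u_1v_1\in E(G)$. The distance between vertices is the length of a shortest path between them, and the distance between edges $xy$ and $zw$ is $\min\{d(x,z),d(x,w),d(y,z),d(y,w)\}$. $\chi'$ denotes the chromatic index. *)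

From mathcomp Require Import all_boot.
Set Implicit Arguments. Unset Strict Implicit. Unset Printing Implicit Defensive.

(* Simple graphs on a finType T given by a symmetric
   irreflexive relation; edges are 2-element vertex sets. *)

Definition cyc_adj (n : nat) (i j : 'I_n) : bool :=
  (val j == (val i).+1 %% n) || (val i == (val j).+1 %% n).

Definition cart_adj (m n : nat) (u v : 'I_m * 'I_n) : bool :=
  ((u.1 == v.1) && cyc_adj u.2 v.2) || ((u.2 == v.2) && cyc_adj u.1 v.1).

Section Graph.
Variable T : finType.
Variable adj : rel T.

Definition is_edge (e : {set T}) : bool :=
  [exists x, exists y, adj x y && (e == [set x; y])].

Definition edges : {set {set T}} := [set e | is_edge e].

Fixpoint dist_le (n : nat) (x y : T) : bool :=
  if n is n'.+1 then dist_le n' x y || [exists z, adj x z && dist_le n' z y]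
  else x == y.

Definition edge_dist_ge (d : nat) (e f : {set T}) : bool :=
  [forall x in e, forall y in f, ~~ dist_le d.-1 x y].

Definition proper_edge_coloring (c : {set T} -> nat) : Prop :=
  forall e f, is_edge e -> is_edge f -> e != f -> e :&: f != set0 -> c e != c f.

Definition edge_colorable (k : nat) : Prop :=
  exists c : {set T} -> nat, proper_edge_coloring c /\ size (undup [seq c e | e <- enum edges]) <= k.

Definition is_chromatic_index (chi : nat) : Prop :=
  edge_colorable chi /\ forall k, edge_colorable k -> chi <= k.

End Graph.

(* The torus C_M □ C_N, M and N odd, is 4-regular with an odd number of
   vertices, so no colour class of an edge colouring can be a perfect matching
   and its chromatic index is at least 5; it therefore suffices to extend the
   precolouring with 5 colours.  Start from a fixed 5-edge-colouring that only
   depends on whether each coordinate is the first position, the last one, or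
   an odd or even interior position.  For each precoloured edge, recolour the
   edges inside its closed neighbourhood (the 8 vertices at distance at most 1
   from it) so that it gets its prescribed colour while these vertices stay
   proper.  Precoloured edges are at distance at least 3, so these
   neighbourhoods are disjoint and the recolourings do not interact.  Seen
   through six consecutive positions, an odd cycle looks like C_3, C_5, C_7 or
   C_9, so the properness of the base colouring and the existence of all the
   local recolourings reduce to finitely many tori, checked by computation. *)

From mathcomp Require Import all_boot zify.
Set Implicit Arguments. Unset Strict Implicit. Unset Printing Implicit Defensive.

(** * Arithmetic on the cycle C_M *)

Definition csucc (M x : nat) : nat := x.+1 %% M.
Definition cpred (M x : nat) : nat := (x + M).-1 %% M.

(* [win M a d], [d < 6], runs through the six consecutive positions a-2, ..., a+3
   of the cycle C_M; in particular [win M a 2 = a]. *)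
Definition win (M a d : nat) : nat := (a + d + (M - 2)) %% M.

Definition win_index (M a x : nat) : nat := (x + (M - a) + 2) %% M.

Section CyclicArithmetic.
Variable M : nat.
Hypothesis M_ge2 : 2 <= M.

Lemma win_lt a d : win M a d < M.
Proof. by rewrite /win ltn_pmod //; lia. Qed.

Lemma win2 a : a < M -> win M a 2 = a.
Proof.
move=> ha; rewrite /win -addnA subnKC // -[RHS](modn_small ha).
by rewrite modnDr.
Qed.

Lemma csucc_win a d : csucc M (win M a d) = win M a d.+1.
Proof. by rewrite /csucc /win -addn1 modnDml; congr (_ %% M); lia. Qed.

Lemma cpred_winS a d : cpred M (win M a d.+1) = win M a d.
Proof.
have predD z : (z + M).-1 = z + M.-1 by lia.
rewrite /cpred /win predD modnDml -[in RHS](modnDr _ M); congr (_ %% M); lia.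
Qed.

Lemma csucc3 x : x < M -> csucc M x = win M x 3.
Proof. by move=> hx; rewrite -{1}(win2 hx) csucc_win. Qed.

Lemma cpred1 x : x < M -> cpred M x = win M x 1.
Proof. by move=> hx; rewrite -{1}(win2 hx) cpred_winS. Qed.

Lemma cpredK x : x < M -> csucc M (cpred M x) = x.
Proof. by move=> hx; rewrite cpred1 // csucc_win win2. Qed.

Lemma win_inj a d1 d2 : 6 <= M -> d1 < 6 -> d2 < 6 ->
  (win M a d1 == win M a d2) = (d1 == d2).
Proof.
move=> hM h1 h2; rewrite /win -!addnA [d1 + _]addnC [d2 + _]addnC !addnA.
by rewrite (eqn_modDl (a + (M - 2))) !modn_small //; lia.
Qed.

Lemma win_indexK a x : a < M -> x < M -> win M a (win_index M a x) = x.
Proof.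
move=> ha hx; rewrite /win /win_index -addnA [_ %% M + _]addnC addnA modnDmr.
by rewrite -[X in _ = X](modn_small hx) -(modnMDl 2 x); congr (_ %% M); lia.
Qed.

Lemma winK a d : 6 <= M -> a < M -> d < 6 -> win_index M a (win M a d) = d.
Proof.
move=> M_ge6 ha hd; rewrite /win /win_index -addnA modnDml.
have -> : a + d + (M - 2) + (M - a + 2) = 2 * M + d by lia.
by rewrite modnMDl modn_small //; lia.
Qed.

Lemma csucc_neq x : x < M -> csucc M x != x.
Proof.
move=> hx; rewrite /csucc; case: (ltnP x.+1 M) => hx1; first by rewrite modn_small; lia.
by rewrite (_ : x.+1 = M) ?modnn; lia.
Qed.

Lemma csucc2_neq x : 3 <= M -> x < M -> csucc M (csucc M x) != x.
Proof.
move=> M_ge3 hx; rewrite (csucc3 hx) csucc_win /win.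
rewrite (_ : x + 4 + (M - 2) = x + 2 + M); last by lia.
rewrite modnDr; case: (ltnP (x + 2) M) => hx2; first by rewrite modn_small; lia.
by rewrite -(subnK hx2) modnDr modn_small; lia.
Qed.

End CyclicArithmetic.

(** * Edge colourings of the torus and the finite check *)

(* [(k, x, y)] codes the edge from (x, y) to (x+1, y) if [k], to (x, y+1) otherwise. *)
Definition code := (bool * nat * nat)%type.

Definition coloring := bool -> nat -> nat -> nat.

Definition end2 (M N : nat) (k : bool) (x y : nat) : nat * nat :=
  if k then (csucc M x, y) else (x, csucc N y).

Definition proper_at (M N : nat) (col : coloring) (x y : nat) : bool :=
  uniq [:: col true x y; col true (cpred M x) y; col false x y; col false x (cpred N y)].

Definition pos_class (M z : nat) : nat :=
  if z == 0 then 0 else if z == M - 1 then 3 else if odd z then 1 else 2.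

Definition class_color (k : bool) (c1 c2 : nat) : nat :=
  if k then (if c1 == 3 then (if c2 == 0 then 3 else if c2 == 3 then 2 else 4)
             else (if c1 == 1 then 1 else 0))
  else (if c2 == 3 then (if c1 == 0 then 1 else if c1 == 3 then 0 else 4)
        else (if c2 == 1 then 3 else 2)).

Definition base_col (M N : nat) : coloring :=
  fun k x y => class_color k (pos_class M x) (pos_class N y).

(* In window coordinates the edge [(k0, a, b)] joins the offsets (2, 2) and
   (3, 2) (or (2, 3)); these are the offsets of its closed neighbourhood. *)
Definition nbhd_offsets (k0 : bool) : seq (nat * nat) :=
  if k0 then [:: (2,2); (3,2); (1,2); (4,2); (2,1); (2,3); (3,1); (3,3)]
  else [:: (2,2); (2,3); (2,1); (2,4); (1,2); (3,2); (1,3); (3,3)].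

Definition nbhd (M N : nat) (k0 : bool) (a b : nat) : seq (nat * nat) :=
  [seq (win M a d.1, win N b d.2) | d <- nbhd_offsets k0].

Definition inside (M N : nat) (V : seq (nat * nat)) (k : bool) (x y : nat) : bool :=
  ((x, y) \in V) && (end2 M N k x y \in V).

Definition inner (M N : nat) (k0 : bool) (a b : nat) : bool -> nat -> nat -> bool :=
  inside M N (nbhd M N k0 a b).

Definition incident_codes (M N x y : nat) : seq code :=
  [:: (true, x, y); (true, cpred M x, y); (false, x, y); (false, x, cpred N y)].

Definition all_codes (M N : nat) : seq code :=
  [seq (k, v.1, v.2) | k <- [:: true; false], v <- [seq (x, y) | x <- iota 0 M, y <- iota 0 N]].

Definition override (M N : nat) (asg : seq (code * nat)) : coloring :=
  fun k x y =>
  if [seq p.2 | p <- asg & p.1 == (k, x, y)] is c :: _ then c else base_col M N k x y.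

(* Depth-first search for colours of the edges [todo] that keep every vertex
   proper, edges in [free] not yet assigned being treated as uncoloured.  The
   search is not verified: its output is checked by [good_recoloring]. *)
Definition consistent (M N : nat) (free : seq code) (t : code) (c : nat)
   (asg : seq (code * nat)) : bool :=
  let: (k, x, y) := t in
  let v := end2 M N k x y in
  all (fun u => (u == t) ||
        if [seq p.2 | p <- asg & p.1 == u] is c' :: _ then c' != c
        else (u \in free) || (base_col M N u.1.1 u.1.2 u.2 != c))
      (incident_codes M N x y ++ incident_codes M N v.1 v.2).

Fixpoint search (M N : nat) (free : seq code) (allowed : code -> seq nat)
   (todo : seq code) (asg : seq (code * nat)) : option (seq (code * nat)) :=
  if todo is t :: rest then
    (fix try (cs : seq nat) :=
       if cs is c :: cs' then
         if consistent M N free t c asg then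
           if search M N free allowed rest ((t, c) :: asg) is Some r then Some r
           else try cs'
         else try cs'
       else None) (allowed t)
  else Some asg.

Definition inner_codes (M N : nat) (V : seq (nat * nat)) : seq code :=
  [seq t <- [seq (k, v.1, v.2) | k <- [:: true; false], v <- V] | inside M N V t.1.1 t.1.2 t.2].

Definition find_recoloring (M N : nat) (k0 : bool) (a b c : nat) : option (seq (code * nat)) :=
  let free := inner_codes M N (nbhd M N k0 a b) in
  search M N free (fun t => if t == (k0, a, b) then [:: c] else iota 0 5)
    ((k0, a, b) :: [seq t <- free | t != (k0, a, b)]) [::].

Definition good_recoloring (M N : nat) (k0 : bool) (a b c : nat) (asg : seq (code * nat)) : bool :=
  [&& all (fun v => proper_at M N (override M N asg) v.1 v.2) (nbhd M N k0 a b),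
      override M N asg k0 a b == c &
      all (fun p => (p.2 < 5) && inner M N k0 a b p.1.1.1 p.1.1.2 p.1.2) asg].

Definition recolorable (M N : nat) (k0 : bool) (a b c : nat) : bool :=
  if find_recoloring M N k0 a b c is Some asg then good_recoloring M N k0 a b c asg else false.

Definition model_sizes : seq nat := [:: 3; 5; 7; 9].

Definition model_certificate : bool :=
  all (fun M => all (fun N =>
    all (fun t : code => all (recolorable M N t.1.1 t.1.2 t.2) (iota 0 5)) (all_codes M N) &&
    all (fun v => proper_at M N (base_col M N) v.1 v.2) [seq (x, y) | x <- iota 0 M, y <- iota 0 N])
    model_sizes) model_sizes.

Lemma model_certificate_ok : model_certificate.
Proof. by vm_compute. Qed.

Definition is_recoloring (M N : nat) (k0 : bool) (a b c : nat) (col : coloring) : Prop :=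
  [/\ forall v, v \in nbhd M N k0 a b -> proper_at M N col v.1 v.2,
      col k0 a b = c,
      forall k x y, col k x y < 5 &
      forall k x y, ~~ inner M N k0 a b k x y -> col k x y = base_col M N k x y].

Lemma class_color_lt k c1 c2 : class_color k c1 c2 < 5.
Proof. by rewrite /class_color; case: k; repeat case: ifP. Qed.

Lemma base_col_lt M N k x y : base_col M N k x y < 5.
Proof. exact: class_color_lt. Qed.

Lemma override_base M N asg k x y : (k, x, y) \notin [seq p.1 | p <- asg] ->
  override M N asg k x y = base_col M N k x y.
Proof.
move=> notin; rewrite /override; suff -> : [seq p <- asg | p.1 == (k, x, y)] = [::] by [].
apply/eqP; rewrite -[_ == _]negbK -has_filter; apply/hasP => -[p hp /eqP hp1].
by move/negP: notin; apply; apply/mapP; exists p.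
Qed.

Lemma override_lt M N asg k x y : all (fun p => p.2 < 5) asg -> override M N asg k x y < 5.
Proof.
move=> /allP lt5; rewrite /override.
case E: [seq p.2 | p <- asg & p.1 == (k, x, y)] => [|c s]; first exact: base_col_lt.
have : c \in [seq p.2 | p <- asg & p.1 == (k, x, y)] by rewrite E inE eqxx.
by case/mapP => p; rewrite mem_filter => /andP [_ /lt5] lt5p ->.
Qed.

Lemma mem_all_codes M N k x y : x < M -> y < N -> (k, x, y) \in all_codes M N.
Proof.
move=> hx hy; apply: (@allpairs_f _ _ _ (fun k v => (k, v.1, v.2)) _ _ k (x, y)).
  by case: k.
by apply: allpairs_f; rewrite mem_iota; lia.
Qed.

Section ModelSizes.
Variables r1 r2 : nat.
Hypotheses (r1_model : r1 \in model_sizes) (r2_model : r2 \in model_sizes).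

Let certificate := allP (allP model_certificate_ok r1 r1_model) r2 r2_model.

Lemma model_base_proper x y : x < r1 -> y < r2 -> proper_at r1 r2 (base_col r1 r2) x y.
Proof.
move=> hx hy; have /andP [_ /allP base_ok] := certificate; apply: (base_ok (x, y)).
by apply: allpairs_f; rewrite mem_iota; lia.
Qed.

Lemma model_recolorable k0 a b c : a < r1 -> b < r2 -> c < 5 -> recolorable r1 r2 k0 a b c.
Proof.
move=> ha hb hc; have /andP [/allP /(_ _ (mem_all_codes k0 ha hb)) /allP recol_ok _] := certificate.
by apply: recol_ok; rewrite mem_iota.
Qed.

Definition model_recol (k0 : bool) (a b c : nat) : coloring :=
  if find_recoloring r1 r2 k0 a b c is Some asg then override r1 r2 asg else base_col r1 r2.

Lemma model_recolP k0 a b c : a < r1 -> b < r2 -> c < 5 ->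
  is_recoloring r1 r2 k0 a b c (model_recol k0 a b c).
Proof.
move=> ha hb hc; have := model_recolorable k0 ha hb hc.
rewrite /recolorable /model_recol; case: find_recoloring => // asg.
case/and3P => /allP proper_nbhd /eqP center /allP in_inner; split => //.
- by move=> k x y; apply: override_lt; apply/allP => p /in_inner /andP [].
- move=> k x y outer; apply: override_base; apply/negP => /mapP [p /in_inner].
  by case/andP => _ + def_p; rewrite -def_p /= (negbTE outer).
Qed.

End ModelSizes.

(** * Transfer from the model tori *)

Definition model_size (M : nat) : nat := if M <= 7 then M else 9.

(* For [M > 7] the six positions [win M a d] of C_M have the same classes as
   the positions [win 9 (model_pos M a) d] of C_9. *)
Definition model_pos (M a : nat) : nat :=
  if M <= 7 then a else if a <= 3 then a else if M - 5 <= a then a + 9 - M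
  else if odd a then 3 else 4.

Definition to_model (M a x : nat) : nat :=
  win (model_size M) (model_pos M a) (win_index M a x).

Lemma modn_cases3 s M : 0 < M -> s < 3 * M ->
  [\/ s %% M = s /\ s < M, s %% M = s - M /\ M <= s < 2 * M
    | s %% M = s - 2 * M /\ 2 * M <= s].
Proof.
move=> M_gt0 s_lt; case: (ltnP s M) => h1; first by constructor 1; rewrite modn_small.
case: (ltnP s (2 * M)) => h2.
  constructor 2; split; last by lia.
  by rewrite -[in LHS](subnK h1) modnDr modn_small; lia.
constructor 3; split; last by lia.
by rewrite -[in LHS](subnK h2) addnC modnMDl modn_small; lia.
Qed.

Section ModelPosition.
Variable M : nat.
Hypotheses (M_odd : odd M) (M_ge3 : 3 <= M).

Lemma model_size_ge3 : 3 <= model_size M.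
Proof. by rewrite /model_size; case: ifP; lia. Qed.

Lemma model_size_mem : model_size M \in model_sizes.
Proof.
rewrite /model_size; case: ifP => // M_le7.
have : [|| M == 3, M == 5 | M == 7] by lia.
by case/or3P => /eqP ->.
Qed.

Lemma model_pos_lt a : a < M -> model_pos M a < model_size M.
Proof. by rewrite /model_pos /model_size; case: ifP => //; repeat case: ifP; lia. Qed.

Lemma pos_class_model a d : a < M -> d < 6 ->
  pos_class M (win M a d) = pos_class (model_size M) (win (model_size M) (model_pos M a) d).
Proof.
move=> ha hd; rewrite /model_size /model_pos; case: ifP => // M_gt7.
have s_lt : a + d + (M - 2) < 3 * M by lia.
case: ifP => ?; [|case: ifP => ?; [|case: ifP => ?]]; rewrite /win;
  have [[-> ?]|[-> ?]|[-> ?]] := modn_cases3 (ltnW (ltnW M_ge3)) s_lt;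
  rewrite /pos_class; repeat case: ifP => ?; lia.
Qed.

Lemma win_eq_model a d1 d2 : d1 < 6 -> d2 < 6 ->
  (win M a d1 == win M a d2) =
  (win (model_size M) (model_pos M a) d1 == win (model_size M) (model_pos M a) d2).
Proof.
move=> h1 h2; rewrite /model_size /model_pos; case: ifP => // M_gt7.
by rewrite !win_inj //; lia.
Qed.

Lemma to_model_win a d : a < M -> d < 6 ->
  to_model M a (win M a d) = win (model_size M) (model_pos M a) d.
Proof.
move=> ha hd; rewrite /to_model /model_size /model_pos; case: ifP => M_le7.
  by rewrite win_indexK // ?win_lt //; lia.
by rewrite winK //; lia.
Qed.

End ModelPosition.

Lemma nbhd_offsets_bounds k0 d : d \in nbhd_offsets k0 -> (0 < d.1 < 5) && (0 < d.2 < 5).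
Proof. by move: d; case: k0 => -[d1 d2]; rewrite /nbhd_offsets !inE !xpair_eqE /=; lia. Qed.

Lemma proper_at_win M N r1 r2 (col col0 : coloring) a b a' b' d1 d2 :
  2 <= M -> 2 <= N -> 2 <= r1 -> 2 <= r2 ->
  (forall k e1 e2, e1 <= d1.+1 -> e2 <= d2.+1 ->
     col k (win M a e1) (win N b e2) = col0 k (win r1 a' e1) (win r2 b' e2)) ->
  proper_at M N col (win M a d1.+1) (win N b d2.+1) =
  proper_at r1 r2 col0 (win r1 a' d1.+1) (win r2 b' d2.+1).
Proof. by move=> ? ? ? ? col_eq; rewrite /proper_at !cpred_winS // !col_eq. Qed.

Section Transfer.
Variables M N : nat.
Hypotheses (M_odd : odd M) (M_ge3 : 3 <= M) (N_odd : odd N) (N_ge3 : 3 <= N).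

Local Notation M' := (model_size M).
Local Notation N' := (model_size N).

Let M_ge2 : 2 <= M. Proof. exact: ltnW. Qed.
Let N_ge2 : 2 <= N. Proof. exact: ltnW. Qed.
Let M'_ge3 : 3 <= M'. Proof. exact: model_size_ge3. Qed.
Let N'_ge3 : 3 <= N'. Proof. exact: model_size_ge3. Qed.

Lemma base_col_model a b k d1 d2 : a < M -> b < N -> d1 < 6 -> d2 < 6 ->
  base_col M N k (win M a d1) (win N b d2) =
  base_col M' N' k (win M' (model_pos M a) d1) (win N' (model_pos N b) d2).
Proof.
move=> ha hb h1 h2.
by rewrite /base_col (pos_class_model M_odd M_ge3 ha h1) (pos_class_model N_odd N_ge3 hb h2).
Qed.

Lemma base_col_proper x y : x < M -> y < N -> proper_at M N (base_col M N) x y.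
Proof.
move=> hx hy; have hx' := model_pos_lt M_odd M_ge3 hx; have hy' := model_pos_lt N_odd N_ge3 hy.
rewrite -(win2 M_ge2 hx) -(win2 N_ge2 hy).
rewrite (@proper_at_win _ _ M' N' _ (base_col M' N') _ _ (model_pos M x) (model_pos N y)); try lia.
  rewrite (win2 (ltnW M'_ge3) hx') (win2 (ltnW N'_ge3) hy').
  exact: (model_base_proper (model_size_mem M_odd M_ge3) (model_size_mem N_odd N_ge3) hx' hy').
by move=> k e1 e2 ? ?; apply: base_col_model => //; lia.
Qed.

Variables (k0 : bool) (a b c : nat).
Hypotheses (a_lt : a < M) (b_lt : b < N) (c_lt : c < 5).

Local Notation a' := (model_pos M a).
Local Notation b' := (model_pos N b).

Lemma nbhd_model d1 d2 : d1 < 6 -> d2 < 6 ->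
  ((win M a d1, win N b d2) \in nbhd M N k0 a b) =
  ((win M' a' d1, win N' b' d2) \in nbhd M' N' k0 a' b').
Proof.
move=> h1 h2; rewrite /nbhd; case: k0;
by rewrite /= !inE !xpair_eqE !(win_eq_model M_odd M_ge3 a) // !(win_eq_model N_odd N_ge3 b).
Qed.

Lemma inner_model k d1 d2 : d1 < 6 -> d2 < 6 -> (if k then d1 < 5 else d2 < 5) ->
  inner M N k0 a b k (win M a d1) (win N b d2) =
  inner M' N' k0 a' b' k (win M' a' d1) (win N' b' d2).
Proof.
move=> h1 h2 hk; rewrite /inner /inside /end2 nbhd_model //; congr (_ && _).
by case: k hk => hk; rewrite !csucc_win ?nbhd_model //; lia.
Qed.

Definition recol : coloring := fun k x y =>
  if inner M N k0 a b k x y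
  then model_recol M' N' k0 a' b' c k (to_model M a x) (to_model N b y)
  else base_col M N k x y.

Let model_recol_spec := model_recolP (model_size_mem M_odd M_ge3) (model_size_mem N_odd N_ge3) k0
  (model_pos_lt M_odd M_ge3 a_lt) (model_pos_lt N_odd N_ge3 b_lt) c_lt.

Lemma recol_win k d1 d2 : d1 < 6 -> d2 < 6 -> (if k then d1 < 5 else d2 < 5) ->
  recol k (win M a d1) (win N b d2) = model_recol M' N' k0 a' b' c k (win M' a' d1) (win N' b' d2).
Proof.
move=> h1 h2 hk; rewrite /recol inner_model //; case: ifP => inner_d.
  by rewrite (to_model_win M_odd M_ge3) // (to_model_win N_odd N_ge3).
have [_ _ _ ->] := model_recol_spec; last by rewrite inner_d.
exact: base_col_model.
Qed.

Lemma recolP : is_recoloring M N k0 a b c recol.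
Proof.
have [model_proper model_centre model_lt _] := model_recol_spec.
split.
- case=> x y /mapP [d d_in [-> ->]] /=.
  have /andP [/andP [d1_gt0 d1_lt] /andP [d2_gt0 d2_lt]] := nbhd_offsets_bounds d_in.
  case: d d_in d1_gt0 d2_gt0 d1_lt d2_lt => -[|e1] [|e2] //= d_in _ _ ? ?.
  rewrite (@proper_at_win _ _ M' N' _ (model_recol M' N' k0 a' b' c) _ _ a' b'); try lia.
    by apply: (model_proper (_, _)); apply/mapP; exists (e1.+1, e2.+1).
  by move=> k f1 f2 ? ?; apply: recol_win; try case: k; lia.
- rewrite -(win2 M_ge2 a_lt) -(win2 N_ge2 b_lt) recol_win ?if_same //.
  by rewrite (win2 (ltnW M'_ge3)) ?(win2 (ltnW N'_ge3)) ?model_pos_lt.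
- by move=> k x y; rewrite /recol; case: ifP => _; [exact: model_lt | exact: base_col_lt].
- by move=> k x y outer; rewrite /recol (negbTE outer).
Qed.

End Transfer.

(** * Gluing the local recolourings *)

Lemma inner_centre M N k0 a b : 2 <= M -> 2 <= N -> a < M -> b < N -> inner M N k0 a b k0 a b.
Proof.
move=> M_ge2 N_ge2 ha hb; rewrite /inner /inside /end2; apply/andP; split.
  by apply/mapP; exists (2, 2); [case: k0 | rewrite /= !win2].
by case: k0; apply/mapP; [exists (3, 2) | exists (2, 3)]; rewrite //= csucc3 ?win2.
Qed.

Section Combination.
Variables M N : nat.
Hypotheses (M_odd : odd M) (M_ge3 : 3 <= M) (N_odd : odd N) (N_ge3 : 3 <= N).

Variables (I : finType) (S : {pred I}).
Variables (centre : I -> bool * 'I_M * 'I_N) (color : I -> nat).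
Hypothesis color_lt : forall i, i \in S -> color i < 5.

Local Notation nbhd_of i := (nbhd M N (centre i).1.1 (centre i).1.2 (centre i).2).
Local Notation inner_of i := (inner M N (centre i).1.1 (centre i).1.2 (centre i).2).
Local Notation recol_of i := (recol M N (centre i).1.1 (centre i).1.2 (centre i).2 (color i)).

Hypothesis nbhd_disjoint : forall i j v, i \in S -> j \in S ->
  v \in nbhd_of i -> v \in nbhd_of j -> i = j.

Let recol_ofP i (iS : i \in S) := recolP M_odd M_ge3 N_odd N_ge3 (centre i).1.1
  (ltn_ord (centre i).1.2) (ltn_ord (centre i).2) (color_lt iS).

Definition combined : coloring := fun k x y =>
  if [pick i in S | inner_of i k x y] is Some i then recol_of i k x y else base_col M N k x y.

Lemma combined_lt k x y : combined k x y < 5.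
Proof.
rewrite /combined; case: pickP => [i /andP [iS _] | _]; last exact: base_col_lt.
by have [_ _ ->] := recol_ofP iS.
Qed.

Lemma combined_near x y k x' y' : (x', y') = (x, y) \/ end2 M N k x' y' = (x, y) ->
  combined k x' y' =
  if [pick i in S | (x, y) \in nbhd_of i] is Some i then recol_of i k x' y'
  else base_col M N k x' y'.
Proof.
move=> incident.
have near i : inner_of i k x' y' -> (x, y) \in nbhd_of i.
  by case/andP; case: incident => <-.
rewrite /combined; case: pickP => [i /andP [iS inner_i] | no_inner];
  case: pickP => [j /andP [jS near_j] | no_near].
- by rewrite (nbhd_disjoint iS jS (near i inner_i) near_j).
- by move: (no_near i); rewrite iS near.
- have [_ _ _ ->] := recol_ofP jS => //.
  by move: (no_inner j); rewrite jS => /negbT.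
- by [].
Qed.

Lemma combined_proper x y : x < M -> y < N -> proper_at M N combined x y.
Proof.
move=> hx hy; rewrite /proper_at.
have [M_ge2 N_ge2] : 2 <= M /\ 2 <= N by split; lia.
rewrite !(@combined_near x y); try by [left | right; rewrite /end2 cpredK].
case: pickP => [i /andP [iS near_i] | _]; last exact: base_col_proper.
by have [proper_nbhd _ _ _] := recol_ofP iS; apply: (proper_nbhd (x, y)).
Qed.

Lemma combined_centre i : i \in S ->
  combined (centre i).1.1 (centre i).1.2 (centre i).2 = color i.
Proof.
move=> iS; have inner_i := inner_centre (centre i).1.1 (ltnW M_ge3) (ltnW N_ge3)
  (ltn_ord (centre i).1.2) (ltn_ord (centre i).2).
rewrite /combined; case: pickP => [j /andP [jS inner_j] | /(_ i)]; last by rewrite iS inner_i.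
have [near_i _] := andP inner_i; have [near_j _] := andP inner_j.
by rewrite -(nbhd_disjoint iS jS near_i near_j); have [_ -> _ _] := recol_ofP iS.
Qed.

End Combination.

Definition torus_adj (M N : nat) (u v : nat * nat) : bool :=
  ((u.1 == v.1) && ((v.2 == csucc N u.2) || (u.2 == csucc N v.2))) ||
  ((u.2 == v.2) && ((v.1 == csucc M u.1) || (u.1 == csucc M v.1))).

(** * The torus as a graph *)

Lemma map_uniq_inj_in (T1 T2 : eqType) (f : T1 -> T2) s :
  uniq (map f s) -> {in s &, injective f}.
Proof.
elim: s => //= a s IH /andP [fa_notin f_uniq] x y.
rewrite !inE => /orP [/eqP -> | x_s] /orP [/eqP -> | y_s] fx_fy //.
- by rewrite fx_fy map_f in fa_notin.
- by rewrite -fx_fy map_f in fa_notin.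
- exact: IH.
Qed.

Lemma nbhd_offsets_near M N k0 a b d : 2 <= M -> 2 <= N -> d \in nbhd_offsets k0 ->
  let u := (win M a d.1, win N b d.2) in
  let v := (win M a 2, win N b 2) in
  let w := end2 M N k0 v.1 v.2 in
  [|| u == v, u == w, torus_adj M N v u | torus_adj M N w u].
Proof.
move=> M_ge2 N_ge2; move: d; apply/allP; case: k0;
by rewrite /= /torus_adj /end2 /= !csucc_win // !eqxx /= ?orbT.
Qed.

Section TorusGraph.
Variables M N : nat.
Hypotheses (M_ge2 : 2 <= M) (N_ge2 : 2 <= N).

Local Notation vertex := ('I_M * 'I_N)%type.
Local Notation ocode := (bool * 'I_M * 'I_N)%type.
Local Notation adj := (@cart_adj M N).

Definition vval (u : vertex) : nat * nat := (val u.1, val u.2).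

Lemma vval_eq (u v : vertex) : (vval u == vval v) = (u == v).
Proof. by case: u v => [u1 u2] [v1 v2]; rewrite !xpair_eqE. Qed.

Lemma cart_adjE (u v : vertex) : adj u v = torus_adj M N (vval u) (vval v).
Proof. by []. Qed.

Lemma cart_adj_sym : symmetric adj.
Proof.
move=> u v; rewrite /cart_adj /cyc_adj [u.1 == _]eq_sym [u.2 == _]eq_sym.
by rewrite [(_ == _.+1 %% N) || _]orbC [(_ == _.+1 %% M) || _]orbC.
Qed.

Definition oend2 (t : ocode) : vertex :=
  if t.1.1 then (ordS t.1.2, t.2) else (t.1.2, ordS t.2).

Definition edge_of_code (t : ocode) : {set vertex} := [set (t.1.2, t.2); oend2 t].

Definition incident_ocodes (v : vertex) : seq ocode :=
  [:: (true, v.1, v.2); (true, ord_pred v.1, v.2); (false, v.1, v.2); (false, v.1, ord_pred v.2)].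

Lemma edge_of_codeP (e : {set vertex}) : is_edge adj e -> exists t, e = edge_of_code t.
Proof.
have ordS_of (i j : 'I_M) : val j = csucc M i -> j = ordS i by move=> ?; apply: val_inj.
have ordS_of' (i j : 'I_N) : val j = csucc N i -> j = ordS i by move=> ?; apply: val_inj.
case/existsP=> -[x1 x2] /existsP [[y1 y2] /andP [+ /eqP ->]].
rewrite /cart_adj /cyc_adj /=.
case/orP => /andP [/eqP <- /orP [] /eqP def_y].
- by exists (false, x1, x2); rewrite /edge_of_code /oend2 /= -(ordS_of' _ _ def_y).
- by exists (false, x1, y2); rewrite /edge_of_code /oend2 /= -(ordS_of' _ _ def_y) setUC.
- by exists (true, x1, x2); rewrite /edge_of_code /oend2 /= -(ordS_of _ _ def_y).
- by exists (true, y1, x2); rewrite /edge_of_code /oend2 /= -(ordS_of _ _ def_y) setUC.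
Qed.

Lemma incident_ocodesP (t : ocode) v : v \in edge_of_code t -> t \in incident_ocodes v.
Proof.
case: t => [[k a] b]; rewrite /edge_of_code !inE => /orP [] /eqP ->;
  by case: k; rewrite /incident_ocodes /oend2 /= ?ordSK eqxx ?orbT.
Qed.

Definition code_of_edge (e : {set vertex}) : ocode :=
  odflt (true, Ordinal (ltnW M_ge2), Ordinal (ltnW N_ge2)) [pick t | edge_of_code t == e].

Lemma code_of_edgeK e : is_edge adj e -> edge_of_code (code_of_edge e) = e.
Proof.
move=> /edge_of_codeP [t def_e]; rewrite /code_of_edge; case: pickP => [t' /eqP // | /(_ t)].
by rewrite def_e eqxx.
Qed.

Lemma proper_edge_coloring_of (col : coloring) (g : nat -> nat) :
  {in gtn 5 &, injective g} -> (forall k x y, col k x y < 5) ->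
  (forall x y, x < M -> y < N -> proper_at M N col x y) ->
  proper_edge_coloring adj
    (fun e => g (col (code_of_edge e).1.1 (code_of_edge e).1.2 (code_of_edge e).2)).
Proof.
move=> g_inj col_lt col_proper e f e_edge f_edge e_ne_f /set0Pn [v].
rewrite inE => /andP [v_e v_f]; apply/negP => /eqP /g_inj.
move=> /(_ (col_lt _ _ _) (col_lt _ _ _)) col_eq.
have e_inc : code_of_edge e \in incident_ocodes v by apply: incident_ocodesP; rewrite code_of_edgeK.
have f_inc : code_of_edge f \in incident_ocodes v by apply: incident_ocodesP; rewrite code_of_edgeK.
(* [val (ord_pred i)] is [cpred M i] by definition. *)
have inc_uniq : uniq [seq col t.1.1 t.1.2 t.2 | t : ocode <- incident_ocodes v].
  exact: col_proper (ltn_ord v.1) (ltn_ord v.2).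
have same_code := map_uniq_inj_in inc_uniq e_inc f_inc col_eq.
by move: e_ne_f; rewrite -(code_of_edgeK e_edge) -(code_of_edgeK f_edge) same_code eqxx.
Qed.

Lemma vval_oend2 (t : ocode) : vval (oend2 t) = end2 M N t.1.1 t.1.2 t.2.
Proof. by case: t => [[[] a] b]. Qed.

Lemma nbhd_near (t : ocode) (u : vertex) : vval u \in nbhd M N t.1.1 t.1.2 t.2 ->
  exists2 z, z \in edge_of_code t & (z == u) || adj z u.
Proof.
case: t => [[k0 a] b] /mapP [d d_in] /esym def_u.
have := nbhd_offsets_near a b M_ge2 N_ge2 d_in; rewrite /= def_u !win2 //.
have -> : end2 M N k0 a b = vval (oend2 (k0, a, b)) by rewrite vval_oend2.
have -> : (val a, val b) = vval (a, b) by [].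
rewrite !vval_eq -!cart_adjE !(eq_sym u).
case/or4P => near_u.
- by exists (a, b); rewrite ?near_u // !inE eqxx.
- by exists (oend2 (k0, a, b)); rewrite ?near_u // !inE eqxx orbT.
- by exists (a, b); rewrite ?near_u ?orbT // !inE eqxx.
- by exists (oend2 (k0, a, b)); rewrite ?near_u ?orbT // !inE eqxx orbT.
Qed.

Lemma nbhd_vval k0 a b v : v \in nbhd M N k0 a b -> exists u : vertex, v = vval u.
Proof.
case/mapP => d _ ->.
by exists (Ordinal (win_lt M_ge2 a d.1), Ordinal (win_lt N_ge2 b d.2)).
Qed.

Lemma dist_le2_near (z z' u : vertex) :
  (z == u) || adj z u -> (z' == u) || adj z' u -> dist_le adj 2 z z'.
Proof.
move=> /orP [/eqP -> | z_u] /orP [/eqP -> | z'_u] /=.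
- by rewrite eqxx.
- by apply/orP; left; apply/orP; right; apply/existsP; exists z'; rewrite cart_adj_sym z'_u eqxx.
- by apply/orP; left; apply/orP; right; apply/existsP; exists u; rewrite z_u eqxx.
- apply/orP; right; apply/existsP; exists u; rewrite z_u /=.
  by apply/orP; right; apply/existsP; exists z'; rewrite cart_adj_sym z'_u eqxx.
Qed.

Lemma nbhd_disjoint_of_dist (e f : {set vertex}) v :
  is_edge adj e -> is_edge adj f -> edge_dist_ge adj 3 e f ->
  let te := code_of_edge e in let tf := code_of_edge f in
  v \in nbhd M N te.1.1 te.1.2 te.2 -> v \notin nbhd M N tf.1.1 tf.1.2 tf.2.
Proof.
move=> e_edge f_edge /forallP far /= v_e; apply/negP => v_f.
have [u def_v] := nbhd_vval v_e; rewrite def_v in v_e v_f.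
have [z z_e near_z] := nbhd_near v_e; have [z' z'_f near_z'] := nbhd_near v_f.
rewrite code_of_edgeK // in z_e; rewrite code_of_edgeK // in z'_f.
have := far z; rewrite z_e => /forallP /(_ z'); rewrite z'_f.
by have := dist_le2_near near_z near_z' => /= ->.
Qed.

End TorusGraph.

(** * The lower bound on the chromatic index *)

Lemma even_card_of_fixfree_involution (T : finType) (f : T -> T) :
  involutive f -> (forall x, f x != x) -> ~~ odd #|T|.
Proof.
move=> f_inv f_fixfree; pose A := [set x | enum_rank x < enum_rank (f x)].
have fA : f @: A = ~: A.
  apply/setP => y; rewrite !inE; apply/imsetP/idP.
    by move=> [x]; rewrite inE => lt_x ->; rewrite f_inv -leqNgt ltnW.
  rewrite -leqNgt => le_y; exists (f y); last by rewrite f_inv.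
  rewrite inE f_inv ltn_neqAle le_y andbT.
  by apply: contra (f_fixfree y) => /eqP /val_inj /enum_rank_inj ->.
have := cardsC A; rewrite -fA card_imset; last exact: inv_inj.
by move=> <-; rewrite addnn odd_double.
Qed.

Section ColorClass.
Variables (T : finType) (adj : rel T).
Hypotheses (adj_sym : symmetric adj) (adj_irr : irreflexive adj).
Variable col : {set T} -> nat.
Hypothesis col_proper : proper_edge_coloring adj col.

Lemma is_edge_adj v w : adj v w -> is_edge adj [set v; w].
Proof. by move=> vw; apply/existsP; exists v; apply/existsP; exists w; rewrite vw eqxx. Qed.

Lemma proper_at_vertex v w w' : adj v w -> adj v w' -> w != w' ->
  col [set v; w] != col [set v; w'].
Proof.
move=> vw vw' w_ne_w'; apply: col_proper; try exact: is_edge_adj.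
  apply: contra w_ne_w' => /eqP same_edge.
  have : w' \in [set v; w] by rewrite same_edge !inE eqxx orbT.
  by rewrite !inE => /orP [/eqP w'_v | /eqP ->]; first by rewrite w'_v adj_irr in vw'.
by apply/set0Pn; exists v; rewrite !inE eqxx.
Qed.

(* A colour seen at every vertex is a perfect matching. *)
Lemma even_card_of_color_everywhere g :
  (forall v, exists w, adj v w && (col [set v; w] == g)) -> ~~ odd #|T|.
Proof.
move=> g_everywhere; pose f v := odflt v [pick w | adj v w && (col [set v; w] == g)].
have fP v : adj v (f v) && (col [set v; f v] == g).
  rewrite /f; case: pickP => [w -> // | none].
  by have [w /andP [vw /eqP col_vw]] := g_everywhere v; move: (none w); rewrite vw col_vw eqxx.
have f_uniq v w : adj v w -> col [set v; w] = g -> w = f v.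
  move=> vw col_vw; apply/eqP; apply: contraT => w_ne.
  have /andP [vf /eqP col_vf] := fP v.
  by move: (proper_at_vertex vw vf w_ne); rewrite col_vw col_vf eqxx.
apply: (@even_card_of_fixfree_involution _ f).
  move=> v; have /andP [vf /eqP col_vf] := fP v.
  by apply/esym/f_uniq; rewrite 1?adj_sym // setUC.
by move=> v; have /andP [vf _] := fP v; apply: contraTneq vf => ->; rewrite adj_irr.
Qed.

End ColorClass.

Lemma ordS_neq n (i : 'I_n) : 2 <= n -> ordS i != i.
Proof. by move=> n_ge2; rewrite -val_eqE csucc_neq. Qed.

Lemma ord_pred_neq n (i : 'I_n) : 2 <= n -> ord_pred i != i.
Proof.
by move=> n_ge2; apply: contra (ordS_neq i n_ge2) => /eqP eq_i; rewrite -{1}eq_i ord_predK.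
Qed.

Lemma ordS_neq_ord_pred n (i : 'I_n) : 3 <= n -> ordS i != ord_pred i.
Proof.
move=> n_ge3; apply: contra (csucc2_neq (ltnW n_ge3) n_ge3 (ltn_ord i)) => /eqP ordS_i.
by apply/eqP; apply: (congr1 val (_ : ordS (ordS i) = i)); rewrite ordS_i ord_predK.
Qed.

Section TorusDegree.
Variables M N : nat.
Hypotheses (M_ge3 : 3 <= M) (N_ge3 : 3 <= N).

Local Notation vertex := ('I_M * 'I_N)%type.

Let M_ge2 : 2 <= M. Proof. exact: ltnW. Qed.
Let N_ge2 : 2 <= N. Proof. exact: ltnW. Qed.

Lemma cart_adj_irr : irreflexive (@cart_adj M N).
Proof.
move=> v; rewrite cart_adjE /torus_adj !eqxx /= ![_ == csucc _ _]eq_sym.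
by rewrite !(negbTE (csucc_neq _ (ltn_ord _))) //; lia.
Qed.

Definition torus_nbrs (v : vertex) : seq vertex :=
  [:: (ordS v.1, v.2); (ord_pred v.1, v.2); (v.1, ordS v.2); (v.1, ord_pred v.2)].

Lemma torus_nbrs_adj v w : w \in torus_nbrs v -> cart_adj v w.
Proof.
rewrite !inE => /or4P [] /eqP ->; rewrite cart_adjE /torus_adj /= !eqxx ?orbT //=.
- by rewrite -/(cpred M v.1) (cpredK M_ge2 (ltn_ord v.1)) eqxx /= ?orbT.
- by rewrite -/(cpred N v.2) (cpredK N_ge2 (ltn_ord v.2)) eqxx /= ?orbT.
Qed.

Lemma torus_nbrs_uniq v : uniq (torus_nbrs v).
Proof.
rewrite /= !inE !xpair_eqE !eqxx /= !(negbTE (ordS_neq _ _)) // !(negbTE (ord_pred_neq _ _)) //.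
by rewrite !(negbTE (ordS_neq_ord_pred _ _)).
Qed.

End TorusDegree.

Lemma torus_chromatic_index_ge5 M N chi : odd M -> odd N -> 3 <= M -> 3 <= N ->
  is_chromatic_index (@cart_adj M N) chi -> 5 <= chi.
Proof.
move=> M_odd N_odd M_ge3 N_ge3 [[col [col_proper ncolors]] _].
rewrite leqNgt; apply/negP => chi_lt5.
set L := undup _ in ncolors.
have adj_irr := cart_adj_irr M_ge3 N_ge3.
have nbr_adj := torus_nbrs_adj M_ge3 N_ge3.
have col_L v w : cart_adj v w -> col [set v; w] \in L.
  by move=> vw; rewrite mem_undup map_f // mem_enum inE is_edge_adj.
have nbr_colors_uniq v : uniq [seq col [set v; w] | w <- torus_nbrs v].
  rewrite map_inj_in_uniq ?(torus_nbrs_uniq M_ge3 N_ge3) // => w w' /nbr_adj vw /nbr_adj vw' same.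
  apply/eqP; apply: contraT => w_ne_w'.
  by have := proper_at_vertex adj_irr col_proper vw vw' w_ne_w'; rewrite same eqxx.
have everywhere g v : g \in L -> exists w, cart_adj v w && (col [set v; w] == g).
  move=> gL; have [/mapP [w /nbr_adj vw ->] | g_new] :=
    boolP (g \in [seq col [set v; w] | w <- torus_nbrs v]); first by exists w; rewrite vw eqxx.
  have : size (g :: [seq col [set v; w] | w <- torus_nbrs v]) <= size L.
    apply: uniq_leq_size; first by rewrite cons_uniq g_new nbr_colors_uniq.
    by move=> c; rewrite inE => /orP [/eqP -> // | /mapP [w /nbr_adj /col_L ? ->]].
  by move=> /= /leq_trans /(_ ncolors); rewrite leqNgt chi_lt5.
pose v0 : 'I_M * 'I_N := (Ordinal (ltnW (ltnW M_ge3)), Ordinal (ltnW (ltnW N_ge3))).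
have v0_adj : cart_adj v0 (ordS v0.1, v0.2) by apply: nbr_adj; rewrite !inE eqxx.
have := even_card_of_color_everywhere (@cart_adj_sym M N) adj_irr col_proper
  (fun v => everywhere _ v (col_L _ _ v0_adj)).
by rewrite card_prod !card_ord oddM M_odd N_odd.
Qed.

Lemma uniq_superseq (s : seq nat) n : uniq s -> size s <= n ->
  exists P : seq nat, [/\ uniq P, size P = n & {subset s <= P}].
Proof.
move=> s_uniq s_size; pose m := (\max_(x <- s) x).+1.
have fresh x : x \in s -> x < m by move=> x_s; rewrite ltnS (@leq_bigmax_seq _ _ predT id x x_s).
exists (take n (s ++ iota m n)); split.
- apply: take_uniq; rewrite cat_uniq s_uniq iota_uniq andbT.
  by apply/hasPn => x; rewrite mem_iota => /andP [m_le _]; apply: contraL m_le => /fresh; lia.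
- by rewrite size_take size_cat size_iota; case: ifP; lia.
- by move=> x x_s; rewrite take_cat; case: ifP; [lia | rewrite mem_cat x_s].
Qed.

Lemma precoloring_extension M N (E0 : {set {set 'I_M * 'I_N}}) (p : {set 'I_M * 'I_N} -> nat) :
  odd M -> 3 <= M -> odd N -> 3 <= N ->
  (forall e, e \in E0 -> is_edge (@cart_adj M N) e) ->
  size (undup [seq p e | e <- enum E0]) <= 5 ->
  (forall e f, e \in E0 -> f \in E0 -> e != f -> edge_dist_ge (@cart_adj M N) 3 e f) ->
  exists c : {set 'I_M * 'I_N} -> nat,
    [/\ proper_edge_coloring (@cart_adj M N) c,
        size (undup [seq c e | e <- enum (edges (@cart_adj M N))]) <= 5 &
        forall e, e \in E0 -> c e = p e].
Proof.
move=> M_odd M_ge3 N_odd N_ge3 E0_edges p_ncolors E0_far.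
have [M_ge2 N_ge2] : 2 <= M /\ 2 <= N by split; lia.
(* Colours 0..4 of the construction index a palette [P] containing the prescribed colours. *)
have [P [P_uniq P_size p_P]] := uniq_superseq (undup_uniq _) p_ncolors.
have p_in_P e : e \in E0 -> p e \in P by move=> e_E0; rewrite p_P // mem_undup map_f ?mem_enum.
pose centre := code_of_edge M_ge2 N_ge2; pose color e := index (p e) P.
have color_lt e : e \in E0 -> color e < 5 by move=> e_E0; rewrite -P_size index_mem p_in_P.
have disjoint e f v : e \in E0 -> f \in E0 ->
    v \in nbhd M N (centre e).1.1 (centre e).1.2 (centre e).2 ->
    v \in nbhd M N (centre f).1.1 (centre f).1.2 (centre f).2 -> e = f.
  move=> e_E0 f_E0 v_e v_f; apply/eqP; apply: contraT => e_ne_f.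
  have := nbhd_disjoint_of_dist (E0_edges e e_E0) (E0_edges f f_E0)
    (E0_far e f e_E0 f_E0 e_ne_f) v_e.
  by rewrite v_f.
pose col := combined E0 centre color.
exists (fun e => nth 0 P (col (centre e).1.1 (centre e).1.2 (centre e).2)); split.
- apply: proper_edge_coloring_of.
  + by move=> i j i_lt j_lt /eqP; rewrite nth_uniq ?P_size // => /eqP.
  + exact: combined_lt.
  + exact: combined_proper.
- rewrite -P_size uniq_leq_size ?undup_uniq // => c.
  by rewrite mem_undup => /mapP [e _ ->]; rewrite mem_nth ?P_size ?combined_lt.
- by move=> e e_E0; rewrite /col combined_centre // nth_index ?p_in_P.
Qed.

Theorem theorem4 (k l : nat) (hk : 1 <= k) (hl : 1 <= l) (chi : nat)
  (hchi : is_chromatic_index (@cart_adj (2 * k + 1) (2 * l + 1)) chi)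
  (E0 : {set {set 'I_(2 * k + 1) * 'I_(2 * l + 1)}})
  (p : {set 'I_(2 * k + 1) * 'I_(2 * l + 1)} -> nat)
  (hE0 : forall e, e \in E0 -> is_edge (@cart_adj (2 * k + 1) (2 * l + 1)) e)
  (hcol : size (undup [seq p e | e <- enum E0]) <= 5)
  (hdist : forall e f, e \in E0 -> f \in E0 -> e != f ->
       edge_dist_ge (@cart_adj (2 * k + 1) (2 * l + 1)) 3 e f) :
  exists c : {set 'I_(2 * k + 1) * 'I_(2 * l + 1)} -> nat,
    [/\ proper_edge_coloring (@cart_adj (2 * k + 1) (2 * l + 1)) c,
        size (undup [seq c e | e <- enum (edges (@cart_adj (2 * k + 1) (2 * l + 1)))]) <= chi &
        forall e, e \in E0 -> c e = p e].
Proof.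
have [M_odd N_odd] : odd (2 * k + 1) /\ odd (2 * l + 1) by split; lia.
have [M_ge3 N_ge3] : 3 <= 2 * k + 1 /\ 3 <= 2 * l + 1 by split; lia.
have chi_ge5 := torus_chromatic_index_ge5 M_odd N_odd M_ge3 N_ge3 hchi.
have [c [c_proper c_ncolors c_p]] := precoloring_extension M_odd M_ge3 N_odd N_ge3 hE0 hcol hdist.
by exists c; split => //; apply: leq_trans chi_ge5.
Qed.
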